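(* Let $k\geq3$, $A=\{0,1,\dots,k-1\}$, $N=k-1$ and let $T\colon A^{N^2}\to A$ be given by $T(x_{1,1},\dots,x_{1,N},\dots,x_{N,1},\dots,x_{N,N})=1$ if $x_{i,j}=i$ for all $i,j$ or $x_{i,j}=j$ for all $i,j$, and $0$ otherwise. Then \[\{T\}^{*(1)}=\{\mathrm{id}_A\}\cup\{f\colon A\to A : f(0)=f(1)=0\}.\]
   Context: An $m$-ary $g$ commutes with an $n$-ary $h$ if $g\bigl((h((x_{ij})_{j}))_{i}\bigr)=h\bigl((g((x_{ij})_{i}))_{j}\bigr)$ for all $(x_{ij})\in A^{m\times n}$. For $F$ a set of finitary operations on $A$ (positive arity), $F^*$ is the set of all finitary operations of positive arity commuting with every member of $F$, and $F^{*(1)}$ is the set of unary members of $F^*$. *)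

From mathcomp Require Import all_boot.
Set Implicit Arguments. Unset Strict Implicit. Unset Printing Implicit Defensive.

Definition op (A : Type) (n : nat) := ('I_n -> A) -> A.

Definition commutes (A : Type) (m n : nat) (g : op A m) (h : op A n) : Prop :=
  forall x : 'I_m -> 'I_n -> A,
    g (fun i => h (fun j => x i j)) = h (fun j => g (fun i => x i j)).

Definition opset (A : Type) := forall n : nat, op A n -> Prop.

Definition opsing (A : Type) (n0 : nat) (h0 : op A n0) : opset A :=
  fun n h => existT (op A) n h = existT (op A) n0 h0.

Definition centralizer (A : Type) (F : opset A) : opset A :=
  fun m g => 0 < m /\ forall n (h : op A n), 0 < n -> F n h -> @commutes A m n g h.

(* F^{*(1)}, viewed as a set of self-maps f : A -> A
   (the unary operation associated with f is x |-> f (x 0)). *)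
Definition centralizer1 (A : Type) (F : opset A) (f : A -> A) : Prop :=
  @centralizer A F 1 (fun x : 'I_1 -> A => f (x ord0)).

(* The operation T : A^(N^2) -> A, with N = k-1, so A = {0,...,k-1} = 'I_N.+1.
   The variable with index p : 'I_(N*N) is x_{i,j} with
   i = p %/ N + 1, j = p %% N + 1 (row-major order x_{1,1},...,x_{N,N}). *)
Definition T_op (N : nat) : op 'I_N.+1 (N * N) :=
  fun x =>
    if [forall p, nat_of_ord (x p) == p %/ N + 1]
       || [forall p, nat_of_ord (x p) == p %% N + 1]
    then inord 1 else ord0.

From mathcomp Require Import all_boot.
From Stdlib Require Import FunctionalExtensionality.

Set Implicit Arguments.
Unset Strict Implicit.
Unset Printing Implicit Defensive.

(* Constant
   arguments are neither the row pattern R (x_ij = i) nor the column pattern C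
   (x_ij = j), so f 0 = 0.  Since T R = 1, either f 1 = 0, or f \o R is again a
   pattern; it cannot be C (R is constant along rows, C is not), so f \o R = R
   and f fixes 1, ..., N.  Conversely, if f 0 = f 1 = 0 then f is not injective,
   hence misses some nonzero value, whereas both patterns take every nonzero
   value; so f \o x is never a pattern and both sides of the equation are 0. *)

Lemma ontoF_inj (T : finType) (f : T -> T) :
  (forall y, y \in codom f) -> injective f.
Proof.
move=> onto; have /image_injP/in2T// : #|codom f| == #|T|.
by rewrite (eq_cardT onto) -cardT.
Qed.

Lemma noninjective_codom_miss (T : finType) (f : T -> T) (a b : T) :
  a != b -> f a = f b -> exists2 y, y != f a & y \notin codom f.
Proof.
move=> neq_ab eq_fab.
case: (pickP [pred y | (y != f a) && (y \notin codom f)]) => [y /andP[]|miss].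
  by exists y.
suff onto y : y \in codom f by rewrite (ontoF_inj onto eq_fab) eqxx in neq_ab.
have [-> | /negbTE neq_y] := eqVneq y (f a); first exact: codom_f.
by move: (miss y); rewrite /= neq_y => /negbFE.
Qed.

Lemma collapse_comp_not_onto (T : finType) (I : Type) (f : T -> T) (a b : T)
    (x g : I -> T) :
  a != b -> f a = a -> f b = a -> (forall y, y != a -> exists i, g i = y) ->
  ~ f \o x =1 g.
Proof.
move=> neq_ab fa fb g_onto fx.
have eq_fab : f a = f b by rewrite fa fb.
have [y] := noninjective_codom_miss neq_ab eq_fab.
rewrite fa => /g_onto[i <-].
by rewrite -fx codom_f.
Qed.

Lemma centralizer1_opsingE (A : Type) (n : nat) (h : op A n) (f : A -> A) :
  0 < n -> centralizer1 (opsing h) f <-> forall x, f (h x) = h (f \o x).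
Proof.
move=> n_gt0; split=> [[_ comm] x | comm].
  exact: (comm n h n_gt0 erefl (fun _ => x)).
split=> // m g _ eq_gh.
pose P (s : {m : nat & op A m}) :=
  commutes (fun x : 'I_1 -> A => f (x ord0)) (projT2 s).
(* [eq_gh] relates dependent pairs, so we rewrite under a predicate on pairs. *)
change (P (existT _ m g)); rewrite eq_gh => x.
exact: comm (x ord0).
Qed.

Section Patterns.

Variable N : nat.
Local Notation A := 'I_N.+1.

Lemma index_gt0 (p : 'I_(N * N)) : 0 < N.
Proof. by have := leq_ltn_trans (leq0n p) (ltn_ord p); rewrite muln_gt0 andbb. Qed.

Definition row_pattern (p : 'I_(N * N)) : A := inord (p %/ N + 1).
Definition col_pattern (p : 'I_(N * N)) : A := inord (p %% N + 1).

Lemma row_patternE p : row_pattern p = p %/ N + 1 :> nat.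
Proof. by rewrite inordK // ltnS addn1 ltn_divLR ?(index_gt0 p). Qed.

Lemma col_patternE p : col_pattern p = p %% N + 1 :> nat.
Proof. by rewrite inordK // ltnS addn1 ltn_pmod ?(index_gt0 p). Qed.

Variant T_op_spec (x : 'I_(N * N) -> A) : A -> Prop :=
  | T_op_row of x =1 row_pattern : T_op_spec x (inord 1)
  | T_op_col of x =1 col_pattern : T_op_spec x (inord 1)
  | T_op_other of ~ x =1 row_pattern & ~ x =1 col_pattern : T_op_spec x ord0.

Lemma T_opP x : T_op_spec x (T_op x).
Proof.
rewrite /T_op.
have -> : [forall p, nat_of_ord (x p) == p %/ N + 1] = [forall p, x p == row_pattern p].
  by apply: eq_forallb => p; rewrite -val_eqE /= row_patternE.
have -> : [forall p, nat_of_ord (x p) == p %% N + 1] = [forall p, x p == col_pattern p].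
  by apply: eq_forallb => p; rewrite -val_eqE /= col_patternE.
case: eqfunP => [/T_op_row // | not_row]; case: eqfunP => [/T_op_col // | not_col].
exact: T_op_other.
Qed.

Lemma row_pattern_onto i : i != ord0 -> exists p, row_pattern p = i.
Proof.
rewrite -val_eqE /= -lt0n => i_gt0.
have N_gt0 : 0 < N := leq_ltn_trans i_gt0 (ltn_ord i).
have lt_p : i.-1 * N < N * N by rewrite ltn_mul2r N_gt0 -ltnS prednK ?ltn_ord.
exists (Ordinal lt_p); apply: val_inj.
by rewrite /= row_patternE /= mulnK // addn1 prednK.
Qed.

Lemma col_pattern_onto i : i != ord0 -> exists p, col_pattern p = i.
Proof.
rewrite -val_eqE /= -lt0n => i_gt0.
have lt_iN : i.-1 < N by rewrite -ltnS prednK ?ltn_ord.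
have lt_p : i.-1 < N * N.
  by rewrite (leq_trans lt_iN) // leq_pmulr // (leq_ltn_trans _ lt_iN).
exists (Ordinal lt_p); apply: val_inj.
by rewrite /= col_patternE /= modn_small // addn1 prednK.
Qed.

Lemma T_op_row_pattern : T_op row_pattern = inord 1.
Proof. by case: T_opP. Qed.

Hypothesis N_gt1 : 1 < N.

Lemma ord0_neq_inord1 : ord0 != inord 1 :> A.
Proof. by rewrite -val_eqE /= inordK // ltnW. Qed.

Let N_lt_sq : N < N * N. Proof. by rewrite ltn_Pmull // ltnW. Qed.

Lemma row_pattern_nonconst : exists p q, row_pattern p != row_pattern q.
Proof.
exists (Ordinal (leq_ltn_trans (leq0n N) N_lt_sq)), (Ordinal N_lt_sq).
by rewrite -val_eqE /= !row_patternE /= div0n divnn ltnW.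
Qed.

Lemma col_pattern_not_by_row :
  exists p q, row_pattern p = row_pattern q /\ col_pattern p != col_pattern q.
Proof.
have lt_1sq := leq_trans N_gt1 (ltnW N_lt_sq).
exists (Ordinal (ltnW lt_1sq)), (Ordinal lt_1sq); split.
  by apply: val_inj; rewrite /= !row_patternE /= div0n divn_small.
by rewrite -val_eqE /= !col_patternE /= mod0n modn_small.
Qed.

Lemma T_op_const (c : A) : T_op (N:=N) (fun _ => c) = ord0.
Proof.
case: T_opP => // [const_row | const_col]; exfalso.
  have [p [q]] := row_pattern_nonconst.
  by rewrite -!const_row eqxx.
have [p [q [_]]] := col_pattern_not_by_row.
by rewrite -!const_col eqxx.
Qed.

End Patterns.

Theorem lemma3p2 (k N : nat) (hk : 3 <= k) (hN : k = N.+1)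
  (f : 'I_N.+1 -> 'I_N.+1) :
  centralizer1 (@opsing _ (N * N) (T_op (N:=N))) f <->
  (f = id \/ (f ord0 = ord0 /\ f (inord 1) = ord0)).
Proof.
have N_gt1 : 1 < N by rewrite -ltnS -hN.
have NN_gt0 : 0 < N * N by rewrite muln_gt0 andbb ltnW.
apply: (iff_trans (centralizer1_opsingE _ f NN_gt0)).
split=> [comm | [-> // | [f0 f1] x]].
- have f0 : f ord0 = ord0 by have := comm (fun _ => ord0); rewrite !T_op_const.
  have := comm (@row_pattern N); rewrite T_op_row_pattern.
  case: T_opP => [f_row _ | f_col _ | _ _ f1]; last by right.
  + left; apply: functional_extensionality => i.
    have [-> // | /row_pattern_onto[p <-]] := eqVneq i ord0.
    exact: f_row.
  + have [p [q [eq_pq]]] := col_pattern_not_by_row N_gt1.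
    by rewrite -!f_col /= eq_pq eqxx.
- have -> : f (T_op x) = ord0 by case: T_opP.
  have neq01 := ord0_neq_inord1 N_gt1.
  case: T_opP => // [fx_row | fx_col]; exfalso.
  + exact: collapse_comp_not_onto neq01 f0 f1 (@row_pattern_onto N) fx_row.
  + exact: collapse_comp_not_onto neq01 f0 f1 (@col_pattern_onto N) fx_col.
Qed.
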